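(* In the setting of the context, $\Pi^\rho_0\ne\emptyset$ if and only if $\rho_0=0$. Moreover, in this case either $\Pi^\rho_0=\{\mathbf{0}\}$ or $\Pi^\rho_0$ fails to be compact.
   Context: Let $(\Omega,\mathcal{F},\mathbb{P})$ be a probability space and a market: riskless asset $S^0_0=1$, $S^0_1=1+r$, $r>-1$; risky assets $S^1,\dots,S^d$ with constants $S^i_0>0$ and real-valued $\mathcal{F}$-measurable $S^i_1$; returns $R^i:=(S^i_1-S^i_0)/S^i_0$. Standing assumptions: nonredundancy (if $\theta\in\mathbb{R}^{1+d}$ with $\sum_{i=0}^d\theta^iS^i_t=0$ a.s. for $t\in\{0,1\}$ then $\theta=0$), $R^i\in L^1$, $\mathbb{E}[R^i]\ne r$ for some $i$. Excess return of $\pi\in\mathbb{R}^d$: $X_\pi:=\pi\cdot(R-r\mathbf{1})$; $\Pi_0:=\{\pi:\mathbb{E}[X_\pi]=0\}$. $L$ is a Riesz space with $L^\infty\subset L\subset L^1$ containing all $X_\pi$; $\rho:L\to(-\infty,\infty]$ is monotone, cash-invariant ($\rho(X+c)=\rho(X)-c$) and positively homogeneous ($\rho(\lambda X)=\lambda\rho(X)$, $\lambda\ge0$). $\rho_0:=\inf\{\rho(X_\pi):\pi\in\Pi_0\}$ and $\Pi^\rho_0$ is the set of $\pi\in\Pi_0$ with $\rho(X_\pi)<\infty$ and $\rho(X_\pi)\le\rho(X_{\pi'})$ for all $\pi'\in\Pi_0$. *)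

From mathcomp Require Import all_boot all_order all_algebra.
From mathcomp Require Import all_classical all_reals all_analysis.
Set Implicit Arguments. Unset Strict Implicit. Unset Printing Implicit Defensive.
Import Order.TTheory GRing.Theory Num.Theory.
Local Open Scope classical_set_scope.
Local Open Scope ring_scope.

Section defs.
Context {d0 : measure_display} {T : measurableType d0} {R : realType}.
Variable P : probability T R.

Definition riesz_L1_space (L : set (T -> R)) : Prop :=
  [/\ (forall X, L X -> measurable_fun setT X /\ P.-integrable setT (EFin \o X)),
      (forall X : T -> R, measurable_fun setT X ->
          (exists M : R, {ae P, forall w, `|X w| <= M}) -> L X),
      (forall X Y, L X -> L Y -> L (X \+ Y)),
      (forall (a : R) X, L X -> L (fun w => a * X w)) &
      (forall X Y, L X -> L Y -> L (fun w => Num.max (X w) (Y w)))].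

Definition risk_measure (L : set (T -> R)) (rho : (T -> R) -> \bar R) : Prop :=
  [/\ (forall X, L X -> rho X != -oo%E),
      (forall X Y, L X -> L Y -> {ae P, forall w, X w <= Y w} ->
          (rho Y <= rho X)%E),
      (forall X (c : R), L X -> rho (fun w => X w + c) = (rho X - c%:E)%E) &
      (forall X (l : R), L X -> 0 <= l -> rho (fun w => l * X w) = (l%:E * rho X)%E)].
End defs.

Section market.
Context {T : Type} {R : realType} {d : nat}.

Definition ret (S0 : 'I_d -> R) (S1 : 'I_d -> T -> R) (i : 'I_d) : T -> R :=
  fun w => (S1 i w - S0 i) / S0 i.

Definition excess (r : R) (S0 : 'I_d -> R) (S1 : 'I_d -> T -> R)
  (pi : 'rV[R]_d) : T -> R :=
  fun w => \sum_(i < d) pi 0 i * (ret S0 S1 i w - r).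
End market.

Section optim.
Context {d0 : measure_display} {T : measurableType d0} {R : realType} {d : nat}.
Variables (P : probability T R) (r : R) (S0 : 'I_d -> R) (S1 : 'I_d -> T -> R)
  (rho : (T -> R) -> \bar R).

Definition Pi0 : set 'rV[R]_d :=
  [set pi | (\int[P]_w (excess r S0 S1 pi w)%:E = 0)%E].

Definition rho0 : \bar R :=
  ereal_inf [set rho (excess r S0 S1 pi) | pi in Pi0].

Definition Pi0rho : set 'rV[R]_d :=
  [set pi | Pi0 pi /\ (rho (excess r S0 S1 pi) < +oo)%E /\
     forall pi', Pi0 pi' ->
       (rho (excess r S0 S1 pi) <= rho (excess r S0 S1 pi'))%E].
End optim.

From mathcomp Require Import all_boot all_order all_algebra.
From mathcomp Require Import all_classical all_reals all_analysis.
From mathcomp Require Import lra.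
Import Order.TTheory GRing.Theory Num.Theory.
Import numFieldNormedType.Exports.
Local Open Scope classical_set_scope.
Local Open Scope ring_scope.

(* Positive homogeneity of rho and linearity of pi |-> X_pi make Pi^rho_0 a
   cone.  If pi is a minimiser then rho(X_pi) <= rho(X_0) = 0 while
   rho(X_(2 pi)) = 2 rho(X_pi) >= rho(X_pi) forces rho(X_pi) >= 0, so the
   minimum value rho_0 is 0; conversely if rho_0 = 0 then pi = 0 is a
   minimiser.  A cone with a nonzero element is unbounded, hence not
   compact. *)

Section cone.
Variables (R : realType) (V : normedModType R) (A : set V).
Hypothesis coneA : forall x l, A x -> 0 <= l -> A (l *: x).

Lemma cone_not_compact x : A x -> x != 0 -> ~ compact A.
Proof.
move=> Ax x0 /compact_bounded [M [_ MA]].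
have nx : 0 < `|x| by rewrite normr_gt0.
pose l := (`|M| + 2) / `|x|.
have l0 : 0 <= l by rewrite divr_ge0 // addr_ge0.
have := MA (`|M| + 1) _ _ (coneA _ _ Ax l0).
rewrite /= normrZ ger0_norm // /l divfK ?gt_eqF //.
by have := ler_norm M; lra.
Qed.

Lemma cone_eq0_or_not_compact : A !=set0 -> A = [set 0] \/ ~ compact A.
Proof.
move=> [y Ay].
have [all0|] := pselect (forall x, A x -> x = 0).
  left; apply/seteqP; split => [x /all0 -> //|_ ->].
  by rewrite -(scale0r y); exact: coneA.
move=> /existsNP [x /not_implyP [Ax /eqP x0]]; right.
exact: cone_not_compact Ax x0.
Qed.

End cone.

Lemma excessZ (T : Type) (R : realType) (d : nat) (r : R) (S0 : 'I_d -> R)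
  (S1 : 'I_d -> T -> R) (l : R) (pi : 'rV[R]_d) :
  excess r S0 S1 (l *: pi) = (fun w => l * excess r S0 S1 pi w).
Proof.
apply/funext => w; rewrite /excess mulr_sumr; apply: eq_bigr => i _.
by rewrite mxE mulrA.
Qed.

Section optimal_portfolios.
Variables (d0 : measure_display) (T : measurableType d0) (R : realType).
Variables (P : probability T R) (d : nat) (r : R).
Variables (S0 : 'I_d -> R) (S1 : 'I_d -> T -> R) (rho : (T -> R) -> \bar R).

Local Notation X := (excess r S0 S1).
Local Notation Pi0 := (Pi0 P r S0 S1).
Local Notation rho0 := (rho0 P r S0 S1 rho).
Local Notation Pi0rho := (Pi0rho P r S0 S1 rho).

Hypothesis integrable_excess :
  forall pi, P.-integrable setT (EFin \o X pi).
Hypothesis rho_excess_neqNy : forall pi, rho (X pi) != -oo%E.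
Hypothesis rho_excessZ : forall pi l, 0 <= l ->
  rho (X (l *: pi)) = (l%:E * rho (X pi))%E.

Lemma Pi0Z pi l : Pi0 pi -> Pi0 (l *: pi).
Proof.
rewrite /Pi0 /= => Epi; rewrite excessZ.
under eq_integral do rewrite EFinM.
rewrite integralZl //; last exact: integrable_excess.
by transitivity (l%:E * 0)%E; [congr (_ * _)%E; exact: Epi | exact: mule0].
Qed.

Lemma Pi0_0 : Pi0 0.
Proof.
rewrite /Pi0 /= -(scale0r (0 : 'rV[R]_d)) excessZ.
under eq_integral do rewrite EFinM.
by rewrite integralZl ?mul0e //; exact: integrable_excess.
Qed.

Lemma rho_excess0 : rho (X 0) = 0%E.
Proof. by rewrite -(scale0r (0 : 'rV[R]_d)) rho_excessZ // mul0e. Qed.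

Lemma rho0_le pi : Pi0 pi -> (rho0 <= rho (X pi))%E.
Proof. by move=> Pi0pi; apply: ereal_inf_lbound; exists pi. Qed.

Lemma Pi0rho_rho_eq0 pi : Pi0rho pi -> rho (X pi) = 0%E.
Proof.
move=> [Pi0pi [rho_lty rho_min]].
have := rho_min _ Pi0_0; have := rho_min _ (Pi0Z _ 2 Pi0pi).
rewrite rho_excessZ ?ler0n // rho_excess0.
move: rho_lty (rho_excess_neqNy pi).
case: (rho (X pi)) => [x| |] //= _ _; rewrite !lee_fin => x2 x0.
by congr (_%:E); apply/eqP; rewrite eq_le x0 /=; move: x2; lra.
Qed.

Lemma Pi0rho_rho0_eq0 pi : Pi0rho pi -> rho0 = 0%E.
Proof.
move=> /[dup] [[Pi0pi [_ rho_min]]] /Pi0rho_rho_eq0 rho0E.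
apply/eqP; rewrite eq_le -rho0E rho0_le //=.
by apply: le_ereal_inf_tmp => _ [pi' Pi0pi' <-]; exact: rho_min.
Qed.

Lemma Pi0rho_neq0_iff_rho0_eq0 : Pi0rho !=set0 <-> rho0 = 0%E.
Proof.
split=> [[pi /Pi0rho_rho0_eq0] //|rho0E].
exists 0; split; [exact: Pi0_0|split; first by rewrite rho_excess0].
by move=> pi' Pi0pi'; rewrite rho_excess0 -rho0E; exact: rho0_le.
Qed.

Lemma Pi0rhoZ pi l : Pi0rho pi -> 0 <= l -> Pi0rho (l *: pi).
Proof.
move=> Pi0rho_pi l0; have [Pi0pi _] := Pi0rho_pi.
have rho0E := Pi0rho_rho0_eq0 _ Pi0rho_pi.
split; first exact: Pi0Z.
rewrite rho_excessZ // Pi0rho_rho_eq0 // mule0; split => // pi' Pi0pi'.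
by rewrite -rho0E; exact: rho0_le.
Qed.
End optimal_portfolios.

Theorem proposition3p6 (d0 : measure_display) (T : measurableType d0)
  (R : realType) (P : probability T R) (d : nat)
  (r : R) (S0 : 'I_d -> R) (S1 : 'I_d -> T -> R)
  (L : set (T -> R)) (rho : (T -> R) -> \bar R) :
  -1 < r ->
  (forall i, 0 < S0 i) ->
  (forall i, measurable_fun setT (S1 i)) ->
  (* nonredundancy *)
  (forall (th0 : R) (th : 'rV[R]_d),
      th0 + \sum_(i < d) th 0 i * S0 i = 0 ->
      {ae P, forall w, th0 * (1 + r) + \sum_(i < d) th 0 i * S1 i w = 0} ->
      th0 = 0 /\ th = 0) ->
  (forall i, P.-integrable setT (EFin \o ret S0 S1 i)) ->
  (exists i, (\int[P]_w (ret S0 S1 i w)%:E)%E != r%:E) ->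
  riesz_L1_space P L ->
  (forall pi, L (excess r S0 S1 pi)) ->
  risk_measure P L rho ->
  ((Pi0rho P r S0 S1 rho !=set0) <-> rho0 P r S0 S1 rho = 0%E) /\
  ((Pi0rho P r S0 S1 rho !=set0) ->
     Pi0rho P r S0 S1 rho = [set 0] \/ ~ compact (Pi0rho P r S0 S1 rho)).
Proof.
move=> _ _ _ _ _ _ [L_integrable _ _ _ _] L_excess [rho_neqNy _ _ rhoZ].
have integrable_excess pi : P.-integrable setT (EFin \o excess r S0 S1 pi).
  by have [] := L_integrable _ (L_excess pi).
have rho_excess_neqNy pi : rho (excess r S0 S1 pi) != -oo%E.
  exact: rho_neqNy (L_excess pi).
have rho_excessZ pi l : 0 <= l ->
    rho (excess r S0 S1 (l *: pi)) = (l%:E * rho (excess r S0 S1 pi))%E.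
  by move=> l0; rewrite excessZ rhoZ.
split; first exact: Pi0rho_neq0_iff_rho0_eq0.
apply: cone_eq0_or_not_compact => pi l; exact: Pi0rhoZ.
Qed.
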